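(* Let $n\ge2$ and let $u$ be a polar $n$-complex number. Then, with $\exp w=\sum_{j\ge0}w^j/j!$, for even $n$ $$e^u=e_+e^{v_+}+e_-e^{v_-}+\sum_{k=1}^{n/2-1}e^{v_k}\big(e_k\cos\tilde v_k+\tilde e_k\sin\tilde v_k\big),$$ and for odd $n$ $$e^u=e_+e^{v_+}+\sum_{k=1}^{(n-1)/2}e^{v_k}\big(e_k\cos\tilde v_k+\tilde e_k\sin\tilde v_k\big).$$
   Context: Polar $n$-complex numbers: $u=x_0+h_1x_1+\cdots+h_{n-1}x_{n-1}$, $x_j\in\mathbb{R}$, $h_0=1$, componentwise addition, bilinear multiplication $h_jh_k=h_{(j+k)\bmod n}$. Canonical variables: $v_+=\sum_px_p$; for even $n$, $v_-=\sum_p(-1)^px_p$; $v_k=\sum_px_p\cos(2\pi kp/n)$, $\tilde v_k=\sum_px_p\sin(2\pi kp/n)$ for $k=1,\dots,\lfloor(n-1)/2\rfloor$. Canonical base: $e_+=\frac1n\sum_ph_p$, $e_-=\frac1n\sum_p(-1)^ph_p$ (even $n$), $e_k=\frac2n\sum_p\cos(2\pi kp/n)h_p$, $\tilde e_k=\frac2n\sum_p\sin(2\pi kp/n)h_p$. *)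

From HB Require Import structures.
From mathcomp Require Import all_boot all_order all_algebra.
From mathcomp Require Import all_classical all_reals all_analysis.
Set Implicit Arguments. Unset Strict Implicit. Unset Printing Implicit Defensive.
Import Order.TTheory GRing.Theory Num.Theory.
Local Open Scope ring_scope.

Section PolarNComplex.
Variables (R : realType) (n : nat).

(* A polar n-complex number u = x_0 + h_1 x_1 + ... + h_{n-1} x_{n-1} is
   represented by its coordinate row vector (x_0, ..., x_{n-1}). *)
Notation pcomplex := 'rV[R]_n.

Definition pc_h (p : nat) : pcomplex := \row_(m < n) ((m : nat) == (p %% n)%N)%:R.

(* bilinear multiplication with h_j h_k = h_{(j+k) mod n} *)
Definition pcmul (x y : pcomplex) : pcomplex :=
  \row_(m < n) \sum_(j < n) \sum_(k < n | ((j + k) %% n)%N == m) x 0 j * y 0 k.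

Definition pcone : pcomplex := pc_h 0.

Definition pcpow (u : pcomplex) (j : nat) : pcomplex := iter j (pcmul u) pcone.

Definition v_plus (u : pcomplex) : R := \sum_(p < n) u 0 p.
Definition v_minus (u : pcomplex) : R := \sum_(p < n) (-1) ^+ p * u 0 p.
Definition v_k (k : nat) (u : pcomplex) : R :=
  \sum_(p < n) u 0 p * cos (2 * pi * k%:R * p%:R / n%:R).
Definition vt_k (k : nat) (u : pcomplex) : R :=
  \sum_(p < n) u 0 p * sin (2 * pi * k%:R * p%:R / n%:R).

Definition e_plus : pcomplex := n%:R^-1 *: \sum_(p < n) pc_h p.
Definition e_minus : pcomplex := n%:R^-1 *: \sum_(p < n) (-1) ^+ p *: pc_h p.
Definition e_k (k : nat) : pcomplex :=
  (2 / n%:R) *: \sum_(p < n) cos (2 * pi * k%:R * p%:R / n%:R) *: pc_h p.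
Definition et_k (k : nat) : pcomplex :=
  (2 / n%:R) *: \sum_(p < n) sin (2 * pi * k%:R * p%:R / n%:R) *: pc_h p.

Definition pcexp_partial (u : pcomplex) (N : nat) : pcomplex :=
  \sum_(j < N) (j`!%:R)^-1 *: pcpow u j.

End PolarNComplex.

(* For k < n let zeta = e^(2 pi i / n) and chi_k u = sum_p x_p zeta^(k p).  Since
   h_j h_l = h_((j + l) mod n) and zeta^n = 1, each chi_k is an algebra morphism from the
   polar n-complex numbers to C, and chi_k u = v_k + i vt_k.  Hence chi_k maps the partial
   sums of exp u to the partial sums of the exponential series at v_k + i vt_k, which
   converge to e^(v_k) (cos vt_k + i sin vt_k).  Discrete Fourier inversion recovers the
   coordinates of u from the chi_k u, and pairing k with n - k (chi_(n-k) is the conjugate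
   of chi_k) turns the inversion sum into the expansion on the canonical base; for even n
   the self-paired index k = n/2 gives the e_- term. *)

From HB Require Import structures.
From mathcomp Require Import all_boot all_order all_algebra.
From mathcomp Require Import all_classical all_reals all_analysis.
From mathcomp Require Import ring lra zify complex.
Import Order.TTheory GRing.Theory Num.Theory.
Import numFieldNormedType.Exports.
Local Open Scope classical_set_scope.
Local Open Scope ring_scope.

Section ReindexSums.
Context {V : nmodType}.
Implicit Type g : nat -> V.

Lemma sum_antidiagonal (F : nat -> nat -> V) N :
  \sum_(m < N) \sum_(i < m.+1) F (m - i)%N i =
  \sum_(j < N) \sum_(l < N - j) F j l.
Proof.
elim: N => [|N IH]; first by rewrite !big_ord0.
rewrite big_ord_recr /= IH [RHS]big_ord_recr subSnn big_ord1 /=.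
have -> : \sum_(j < N) \sum_(l < N.+1 - j) F j l =
          \sum_(j < N) (\sum_(l < N - j) F j l + F j (N - j)%N).
  by apply: eq_bigr => j _; rewrite subSn ?big_ord_recr // ltnW.
rewrite big_split -addrA; congr (_ + _).
rewrite (reindex_inj rev_ord_inj) big_ord_recr /= subnn subn0.
by congr (_ + _); apply: eq_bigr => i _; rewrite subSS subKn // ltnW.
Qed.

Lemma sum_nat_rev_tail g N h : (h <= N)%N ->
  \sum_(N - h <= k < N) g k = \sum_(1 <= k < h.+1) g (N - k)%N.
Proof.
elim: h => [|h IH] h_le_N; first by rewrite subn0 !big_geq.
rewrite big_ltn ?subnSK ?IH ?(ltnW h_le_N) //; last by lia.
by rewrite [RHS]big_nat_recr //= addrC.
Qed.

Lemma sum_fold_odd g N m : N = m.*2.+1 ->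
  (forall k, (0 < k < N)%N -> g (N - k)%N = g k) ->
  \sum_(k < N) g k = g 0%N + (\sum_(1 <= k < m.+1) g k) *+ 2.
Proof.
move=> N_eq g_sym; rewrite -(big_mkord xpredT g) big_ltn ?N_eq //.
rewrite (big_cat_nat _ (n := m.+1)) //=; last by lia.
rewrite mulr2n -N_eq; congr (_ + (_ + _)).
have -> : \sum_(m.+1 <= k < N) g k = \sum_(N - m <= k < N) g k.
  by rewrite (_ : N - m = m.+1)%N //; lia.
rewrite sum_nat_rev_tail; last by lia.
by apply: eq_big_nat => k k_range; apply: g_sym; lia.
Qed.

Lemma sum_fold_even g N m : N = m.*2 -> (0 < m)%N ->
  (forall k, (0 < k < N)%N -> g (N - k)%N = g k) ->
  \sum_(k < N) g k = g 0%N + g m + (\sum_(1 <= k < m) g k) *+ 2.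
Proof.
move=> N_eq m_gt0 g_sym; rewrite -(big_mkord xpredT g) big_ltn; last by lia.
rewrite (big_cat_nat _ (n := m)) //=; last by lia.
rewrite (big_ltn (m := m)); last by lia.
have -> : \sum_(m.+1 <= k < N) g k = \sum_(1 <= k < m) g k.
  rewrite (_ : m.+1 = N - m.-1)%N; last by lia.
  rewrite sum_nat_rev_tail; last by lia.
  by rewrite prednK //; apply: eq_big_nat => k k_range; apply: g_sym; lia.
by rewrite mulr2n [_ + (g m + _)]addrCA addrA.
Qed.

End ReindexSums.

Section ExpPartial.
Context {K : numFieldType}.
Implicit Types x y : K.

Definition exp_partial N x : K := \sum_(j < N) (j`!%:R)^-1 * x ^+ j.

Definition exp_tail N x y : K :=
  \sum_(j < N) \sum_(N - j <= l < N) (j`!%:R)^-1 * (l`!%:R)^-1 * (x ^+ j * y ^+ l).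

Lemma exp_partialD N x y :
  exp_partial N (x + y) =
  \sum_(j < N) \sum_(l < N - j) (j`!%:R)^-1 * (l`!%:R)^-1 * (x ^+ j * y ^+ l).
Proof.
rewrite -(sum_antidiagonal
  (fun j l => (j`!%:R)^-1 * (l`!%:R)^-1 * (x ^+ j * y ^+ l))).
apply: eq_bigr => m _.
rewrite exprDn mulr_sumr; apply: eq_bigr => i _.
have im : (i <= m)%N by rewrite -ltnS.
have fact_neq0 k : (k`!%:R : K) != 0 by rewrite pnatr_eq0 -lt0n fact_gt0.
rewrite -(bin_fact im) !natrM invfM -mulr_natr; field.
by rewrite !fact_neq0 pnatr_eq0 -lt0n bin_gt0 im.
Qed.

Lemma exp_partialM N x y :
  exp_partial N x * exp_partial N y = exp_partial N (x + y) + exp_tail N x y.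
Proof.
rewrite exp_partialD /exp_tail -big_split /= mulr_suml; apply: eq_bigr => j _.
rewrite -(big_mkord xpredT (fun l => (j`!%:R)^-1 * (l`!%:R)^-1 * (x ^+ j * y ^+ l))).
rewrite -big_cat_nat ?leq_subr //=.
rewrite /exp_partial big_mkord mulr_sumr.
by apply: eq_bigr => l _; ring.
Qed.

Lemma norm_exp_tail N x y : `|exp_tail N x y| <= exp_tail N `|x| `|y|.
Proof.
apply: le_trans (ler_norm_sum _ _ _) _; apply: ler_sum => j _.
apply: le_trans (ler_norm_sum _ _ _) _; apply: ler_sum => l _.
by rewrite !normrM !normrX !normfV !normr_nat.
Qed.

End ExpPartial.

Lemma rmorph_exp_partial (K L : numFieldType) (f : {rmorphism K -> L}) N x :
  f (exp_partial N x) = exp_partial N (f x).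
Proof.
by rewrite rmorph_sum; apply: eq_bigr => j _; rewrite rmorphM rmorphXn fmorphV rmorph_nat.
Qed.

Lemma rmorph_exp_tail (K L : numFieldType) (f : {rmorphism K -> L}) N x y :
  f (exp_tail N x y) = exp_tail N (f x) (f y).
Proof.
rewrite rmorph_sum; apply: eq_bigr => j _; rewrite rmorph_sum; apply: eq_bigr => l _.
by rewrite !rmorphM !rmorphXn !fmorphV !rmorph_nat.
Qed.

Section RealExp.
Context {R : realType}.

Lemma exp_partial_cvg (x : R) : exp_partial^~ x @ \oo --> expR x.
Proof.
have -> : exp_partial^~ x = series (exp_coeff x).
  by apply/funext => N; rewrite /series /= big_mkord; apply: eq_bigr => j _; rewrite mulrC.
exact: is_cvg_series_exp_coeff.
Qed.

Lemma exp_tail_cvg0 (x y : R) : (fun N => exp_tail N x y) @ \oo --> 0.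
Proof.
have -> : (fun N => exp_tail N x y) =
          fun N => exp_partial N x * exp_partial N y - exp_partial N (x + y).
  by apply/funext => N; rewrite exp_partialM addrC addKr.
rewrite -(subrr (expR (x + y))) {1}expRD.
by apply: cvgB; [apply: cvgM |]; exact: exp_partial_cvg.
Qed.

End RealExp.

Lemma norm_le_cvg0 {R : realFieldType} {f g : nat -> R} :
  g @ \oo --> 0 -> (forall N, `|f N| <= g N) -> f @ \oo --> 0.
Proof.
move=> g0 fg; apply: (@squeeze_cvgr _ _ _ _ (fun N => - g N) g) => //.
  by near=> N; rewrite -ler_norml.
by rewrite -oppr0; exact: cvgN.
Unshelve. all: by end_near.
Qed.

Lemma cvg_mx_entrywise {K : numFieldType} {T : Type} {F : set_system T}
    {FF : Filter F} {m n : nat} (f : T -> 'M[K]_(m, n)) (l : 'M[K]_(m, n)) :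
  (forall i j, (fun x => f x i j) @ F --> l i j) -> f @ F --> l.
Proof.
move=> f_cvg; rewrite [l]matrix_sum_delta.
have -> : f = fun x => \sum_i \sum_j f x i j *: delta_mx i j.
  by apply/funext => x; rewrite -matrix_sum_delta.
apply: cvg_big => [|i _]; first exact: add_continuous.
apply: cvg_big => [|j _]; first exact: add_continuous.
by apply: cvgZ => //; exact: cvg_cst.
Qed.

Section ComplexExp.
Context {R : realType}.
Local Open Scope complex_scope.
(* Num.Theory exports its own Re, Im, ReM, ... for numClosedFieldType; hence the explicit
   notations below and the complex_ prefix of the lemma names. *)
Local Notation Re := (@complex.Re R).
Local Notation Im := (@complex.Im R).
Implicit Types (a b x y : R) (z : R[i]).

Lemma complex_ReM z w : Re (z * w) = Re z * Re w - Im z * Im w.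
Proof. by case: z w => [a b] [c d]. Qed.

Lemma complex_ImM z w : Im (z * w) = Re z * Im w + Im z * Re w.
Proof. by case: z w => [a b] [c d]. Qed.

Lemma complex_Re_realM x z : Re (x%:C * z) = x * Re z.
Proof. by rewrite complex_ReM /= mul0r subr0. Qed.

Lemma complex_Im_realM x z : Im (x%:C * z) = x * Im z.
Proof. by rewrite complex_ImM /= mul0r addr0. Qed.

Lemma complex_ReB z w : Re (z - w) = Re z - Re w.
Proof. by case: z w => [a b] [c d]. Qed.

Lemma complex_ImB z w : Im (z - w) = Im z - Im w.
Proof. by case: z w => [a b] [c d]. Qed.

Lemma complex_Re_sum I (r : seq I) (P : pred I) (F : I -> R[i]) :
  Re (\sum_(i <- r | P i) F i) = \sum_(i <- r | P i) Re (F i).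
Proof. exact: (raddf_sum (Re : Rcomplex R -> R)). Qed.

Lemma complex_Im_sum I (r : seq I) (P : pred I) (F : I -> R[i]) :
  Im (\sum_(i <- r | P i) F i) = \sum_(i <- r | P i) Im (F i).
Proof. exact: (raddf_sum (Im : Rcomplex R -> R)). Qed.

Lemma complex_Re_le_norm z : (`|Re z|)%:C <= `|z|.
Proof. by rewrite normc_def lecR -sqrtr_sqr ler_wsqrtr // lerDl sqr_ge0. Qed.

Lemma complex_Im_le_norm z : (`|Im z|)%:C <= `|z|.
Proof. by rewrite normc_def lecR -sqrtr_sqr ler_wsqrtr // lerDr sqr_ge0. Qed.

Definition expi x : R[i] := cos x +i* sin x.

Lemma expiD x y : expi (x + y) = expi x * expi y.
Proof.
rewrite /expi cosD sinD; apply/eqP; rewrite eq_complex complex_ReM complex_ImM /=.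
by apply/andP; split; apply/eqP; ring.
Qed.

Lemma expiX x j : expi x ^+ j = expi (x *+ j).
Proof.
elim: j => [|j IH]; first by rewrite /expi mulr0n cos0 sin0.
by rewrite exprS IH -expiD mulrS.
Qed.

Lemma expi2pi : expi (pi *+ 2) = 1.
Proof. by rewrite /expi cos2pi sin2pi. Qed.

Lemma imaginaryX b j :
  Re ((b *i) ^+ j) = (~~ odd j)%:R * (-1) ^+ j./2 * b ^+ j /\
  Im ((b *i) ^+ j) = (odd j)%:R * (-1) ^+ j.-1./2 * b ^+ j.
Proof.
elim: j => [|j [IHr IHi]]; first by rewrite !expr0 /= !mulr1.
rewrite exprSr complex_ReM complex_ImM IHr IHi /=.
case oj: (odd j) => /=; last by rewrite uphalf_half oj add0n exprSr; split; ring.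
have [m ->] : exists m, j = m.*2.+1.
  by exists j./2; rewrite -[LHS]odd_double_half oj.
by rewrite /= uphalf_double doubleK !exprSr; split; ring.
Qed.

Lemma exp_partial_imaginary N b :
  Re (exp_partial N (b *i)) = series (cos_coeff b) N /\
  Im (exp_partial N (b *i)) = series (sin_coeff b) N.
Proof.
have invf_real j : (j`!%:R : R[i])^-1 = ((j`!%:R)^-1)%:C by rewrite fmorphV rmorph_nat.
rewrite complex_Re_sum complex_Im_sum /series /= !big_mkord.
by split; apply: eq_bigr => j _;
  rewrite invf_real (complex_Re_realM, complex_Im_realM)
          ?(imaginaryX b j).1 ?(imaginaryX b j).2 mulrC.
Qed.

(* The partial sums at a + ib are the product of those at a and at ib, up to a Cauchy tail
   which is dominated by the real tail at |a| and |b|; the latter vanishes because expR is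
   multiplicative. *)
Lemma exp_partial_complex_cvg a b :
  (fun N => Re (exp_partial N (a +i* b))) @ \oo --> expR a * cos b /\
  (fun N => Im (exp_partial N (a +i* b))) @ \oo --> expR a * sin b.
Proof.
pose T N := exp_tail N a%:C (b *i).
have splitE N :
    exp_partial N (a +i* b) = (exp_partial N a)%:C * exp_partial N (b *i) - T N.
  rewrite rmorph_exp_partial exp_partialM addrK; congr exp_partial.
  by apply/eqP; rewrite eq_complex /= addr0 add0r !eqxx.
have T_le N : `|T N| <= (exp_tail N `|a| `|b|)%:C.
  rewrite rmorph_exp_tail /T; apply: le_trans (norm_exp_tail _ _ _) _.
  by rewrite !normc_def /= expr0n addr0 add0r !sqrtr_sqr.
have T_cvg0 (f : R[i] -> R) :
    (forall z, (`|f z|)%:C <= `|z|) -> (fun N => f (T N)) @ \oo --> 0.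
  move=> f_le; apply: (norm_le_cvg0 (exp_tail_cvg0 `|a| `|b|)) => N.
  by have := le_trans (f_le (T N)) (T_le N); rewrite lecR.
have cos_cvg : series (cos_coeff b) @ \oo --> cos b.
  by rewrite cos.unlock; exact: is_cvg_series_cos_coeff.
have sin_cvg : series (sin_coeff b) @ \oo --> sin b.
  by rewrite sin.unlock; exact: is_cvg_series_sin_coeff.
split.
- have -> : (fun N => Re (exp_partial N (a +i* b))) =
            fun N => exp_partial N a * series (cos_coeff b) N - Re (T N).
    apply/funext => N.
    by rewrite splitE complex_ReB complex_Re_realM (exp_partial_imaginary N b).1.
  rewrite -[X in _ --> X]subr0.
  apply: cvgB; first exact: cvgM (exp_partial_cvg a) cos_cvg.
  exact: T_cvg0 complex_Re_le_norm.
- have -> : (fun N => Im (exp_partial N (a +i* b))) =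
            fun N => exp_partial N a * series (sin_coeff b) N - Im (T N).
    apply/funext => N.
    by rewrite splitE complex_ImB complex_Im_realM (exp_partial_imaginary N b).2.
  rewrite -[X in _ --> X]subr0.
  apply: cvgB; first exact: cvgM (exp_partial_cvg a) sin_cvg.
  exact: T_cvg0 complex_Im_le_norm.
Qed.

End ComplexExp.

Lemma cos_neq1 {R : realType} (x : R) : 0 < x < pi *+ 2 -> cos x != 1.
Proof.
move=> /andP[x_gt0 x_lt2pi]; pose y := x / 2.
have y_pi : 0 < y < pi.
  by rewrite /y ltr_pdivrMr // mulr_natr x_lt2pi andbT; exact: divr_gt0.
have -> : x = y *+ 2 by rewrite /y -mulr_natr mulfVK // pnatr_eq0.
rewrite cos_mulr2n; apply/eqP => cos_y.
have : sin y ^+ 2 = 0 by have := cos2Dsin2 y; rewrite -mulr_natr in cos_y; lra.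
by move/eqP; rewrite expf_eq0 /= (gt_eqF (sin_gt0_pi y_pi)).
Qed.

Section PolarCharacters.
Context {R : realType} {n : nat}.
Hypothesis n_gt0 : (0 < n)%N.
Implicit Type u : 'rV[R]_n.
Local Open Scope complex_scope.
Local Notation Re := (@complex.Re R).
Local Notation Im := (@complex.Im R).

Definition angle (m : nat) : R := (pi *+ 2 / n%:R) *+ m.

Definition zeta : R[i] := expi (angle 1).

Lemma n_neq0 : n%:R != 0 :> R.
Proof. by rewrite pnatr_eq0 -lt0n. Qed.

Lemma angleE k p : 2 * pi * k%:R * p%:R / n%:R = angle (k * p).
Proof. by rewrite /angle -[_ *+ (k * p)]mulr_natr natrM -[pi *+ 2]mulr_natl; ring. Qed.

Lemma angleD m1 m2 : angle (m1 + m2) = angle m1 + angle m2.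
Proof. exact: mulrnDr. Qed.

Lemma angle_mull k m : angle (k * m) = angle k *+ m.
Proof. by rewrite /angle mulrnA. Qed.

Lemma angle_n : angle n = pi *+ 2.
Proof. by rewrite /angle -mulr_natr divfK // n_neq0. Qed.

Lemma zetaX m : zeta ^+ m = expi (angle m).
Proof. by rewrite /zeta expiX -angle_mull mul1n. Qed.

Lemma angle_gt0_lt2pi m : (0 < m < n)%N -> 0 < angle m < pi *+ 2.
Proof.
move=> /andP[m_gt0 m_lt_n].
have t_gt0 : 0 < m%:R / n%:R :> R by rewrite divr_gt0 ?ltr0n.
have t_lt1 : m%:R / n%:R < 1 :> R by rewrite ltr_pdivrMr ?ltr0n // mul1r ltr_nat.
have pi_gt0 := @pi_gt0 R.
have -> : angle m = pi *+ 2 * (m%:R / n%:R) by rewrite /angle -mulr_natr; ring.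
rewrite -mulr_natr; apply/andP; split; nra.
Qed.

Lemma zeta_prim : n.-primitive_root zeta.
Proof.
apply/andP; split=> //; apply/forallP => i; rewrite unity_rootE zetaX.
have [->|i_n] := eqVneq i.+1 n; first by rewrite angle_n expi2pi !eqxx.
rewrite eqbF_neg; have : cos (angle i.+1) != 1.
  by apply/cos_neq1/angle_gt0_lt2pi; have := ltn_ord i; lia.
by apply: contra => /eqP/(congr1 Re) /= ->.
Qed.

Lemma sum_zetaX d : \sum_(k < n) zeta ^+ (k * d) = (n %| d)%:R * n%:R.
Proof.
under eq_bigr do rewrite mulnC exprM.
rewrite (prim_order_dvd zeta_prim); have [zd1|zd_neq1] := eqVneq (zeta ^+ d) 1.
  by under eq_bigr do rewrite zd1 expr1n; rewrite sumr_const card_ord mul1r.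
apply/eqP; rewrite mul0r.
have : (zeta ^+ d - 1) * \sum_(k < n) zeta ^+ d ^+ k = 0.
  by rewrite -subrX1 -exprM mulnC exprM (prim_expr_order zeta_prim) expr1n subrr.
by move/eqP; rewrite mulf_eq0 subr_eq0 (negbTE zd_neq1).
Qed.

Lemma angle_reflect k m : (k <= n)%N ->
  angle ((n - k) * m) = (pi *+ 2) *+ m - angle (k * m).
Proof.
move=> k_le_n; apply/eqP.
by rewrite eq_sym subr_eq -angleD -mulnDl subnK // angle_mull angle_n.
Qed.

Lemma cos_angle_reflect k m : (k <= n)%N ->
  cos (angle ((n - k) * m)) = cos (angle (k * m)).
Proof. by move=> k_le_n; rewrite angle_reflect // addrC (periodicn (@cosD2pi R)) cosN. Qed.

Lemma sin_angle_reflect k m : (k <= n)%N ->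
  sin (angle ((n - k) * m)) = - sin (angle (k * m)).
Proof. by move=> k_le_n; rewrite angle_reflect // addrC (periodicn (@sinD2pi R)) sinN. Qed.

Definition chi (k : nat) (w : 'rV[R]_n) : R[i] :=
  \sum_(p < n) (w 0 p)%:C * zeta ^+ (k * p).

Lemma chiE k w : chi k w = v_k k w +i* vt_k k w.
Proof.
apply/eqP; rewrite eq_complex complex_Re_sum complex_Im_sum; apply/andP; split; apply/eqP.
  by apply: eq_bigr => p _; rewrite complex_Re_realM zetaX angleE.
by apply: eq_bigr => p _; rewrite complex_Im_realM zetaX angleE.
Qed.

Lemma chiD k x y : chi k (x + y) = chi k x + chi k y.
Proof. by rewrite /chi -big_split; apply: eq_bigr => p _; rewrite mxE rmorphD mulrDl. Qed.

Lemma chi0 k : chi k 0 = 0.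
Proof. by rewrite /chi big1 // => p _; rewrite mxE rmorph0 mul0r. Qed.

Lemma chiZ k c w : chi k (c *: w) = c%:C * chi k w.
Proof. by rewrite /chi mulr_sumr; apply: eq_bigr => p _; rewrite mxE rmorphM mulrA. Qed.

Lemma chi_sum k I (r : seq I) (F : I -> 'rV[R]_n) :
  chi k (\sum_(i <- r) F i) = \sum_(i <- r) chi k (F i).
Proof. exact: (big_morph _ (chiD k) (chi0 k)). Qed.

Lemma chi_pcone k : chi k (pcone R n) = 1.
Proof.
rewrite /chi (bigD1 (Ordinal n_gt0)) //= big1 => [|p p_neq0].
  by rewrite mxE mod0n eqxx muln0 expr0 mulr1 addr0.
by move: p_neq0; rewrite -val_eqE mxE mod0n /= => /negbTE ->; rewrite mul0r.
Qed.

Lemma zetaX_modn k m : zeta ^+ (k * (m %% n)) = zeta ^+ (k * m).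
Proof. by rewrite -[RHS](prim_expr_mod zeta_prim) -modnMmr (prim_expr_mod zeta_prim). Qed.

Lemma chi_pcmul k x y : chi k (pcmul x y) = chi k x * chi k y.
Proof.
rewrite /chi big_distrlr /=.
under eq_bigr => m _ do rewrite mxE rmorph_sum mulr_suml.
rewrite exchange_big; apply: eq_bigr => j _.
under eq_bigr => m _ do rewrite rmorph_sum mulr_suml.
rewrite (exchange_big_dep xpredT) //=; apply: eq_bigr => l _.
rewrite (big_pred1 (Ordinal (ltn_pmod (j + l) n_gt0))) //= zetaX_modn.
by rewrite mulnDr exprD rmorphM mulrACA.
Qed.

Lemma chi_pcpow k u j : chi k (pcpow u j) = chi k u ^+ j.
Proof.
elim: j => [|j IH]; first by rewrite expr0 chi_pcone.
by rewrite /pcpow iterS -/(pcpow u j) chi_pcmul IH exprS.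
Qed.

Lemma chi_pcexp_partial k u N : chi k (pcexp_partial u N) = exp_partial N (chi k u).
Proof.
rewrite chi_sum; apply: eq_bigr => j _.
by rewrite chiZ chi_pcpow fmorphV rmorph_nat.
Qed.

(* zeta ^+ (k * (n - p)) is the conjugate of zeta ^+ (k * p). *)
Lemma chi_inversion w (p : 'I_n) :
  \sum_(k < n) chi k w * zeta ^+ (k * (n - p)) = n%:R * (w 0 p)%:C.
Proof.
have -> : \sum_(k < n) chi k w * zeta ^+ (k * (n - p)) =
          \sum_(q < n) (w 0 q)%:C * \sum_(k < n) zeta ^+ (k * (q + (n - p))).
  under eq_bigr do rewrite mulr_suml; rewrite exchange_big; apply: eq_bigr => q _.
  by rewrite mulr_sumr; apply: eq_bigr => k _; rewrite mulnDr exprD mulrA.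
under eq_bigr do rewrite sum_zetaX.
rewrite (bigD1 p) //= big1 => [|q q_neq_p].
  by rewrite subnKC ?dvdnn 1?ltnW // mul1r addr0 mulrC.
have q_ne_p : (q : nat) != p := q_neq_p.
have q_lt_n := ltn_ord q; have p_lt_n := ltn_ord p.
have -> : (n %| q + (n - p))%N = false.
  apply/negbTE; rewrite /dvdn; case: (ltngtP q p) => [q_lt_p|p_lt_q|q_eq_p].
  - by rewrite modn_small; lia.
  - by rewrite (_ : q + (n - p) = q - p + n)%N ?modnDr ?modn_small; lia.
  - by rewrite q_eq_p eqxx in q_ne_p.
by rewrite mul0r mulr0.
Qed.

Lemma coord_chi (w : 'rV[R]_n) (p : 'I_n) : w 0 p = n%:R^-1 *
  \sum_(k < n) (Re (chi k w) * cos (angle (k * p)) + Im (chi k w) * sin (angle (k * p))).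
Proof.
have := congr1 Re (chi_inversion w p).
rewrite -[n%:R](rmorph_nat (real_complex R)) complex_Re_realM complex_Re_sum /= => inversion.
apply: (mulfI n_neq0); rewrite -inversion mulVKf ?n_neq0 //; apply: eq_bigr => k _.
rewrite complex_ReM zetaX mulnC /= cos_angle_reflect ?sin_angle_reflect 1?ltnW // mulnC.
by rewrite mulrN opprK.
Qed.

Definition exp_harmonic (u : 'rV[R]_n) (p k : nat) : R :=
  expR (v_k k u) * cos (vt_k k u - angle (k * p)).

Lemma pcexp_partial_coord_cvg u (p : 'I_n) :
  (fun N => pcexp_partial u N 0 p) @ \oo --> n%:R^-1 * \sum_(k < n) exp_harmonic u p k.
Proof.
have -> : (fun N => pcexp_partial u N 0 p) = fun N => n%:R^-1 * \sum_(k < n)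
    (Re (exp_partial N (v_k k u +i* vt_k k u)) * cos (angle (k * p)) +
     Im (exp_partial N (v_k k u +i* vt_k k u)) * sin (angle (k * p))).
  by apply/funext => N; rewrite coord_chi; under eq_bigr do rewrite chi_pcexp_partial chiE.
apply: cvgM; first exact: cvg_cst.
apply: cvg_big => [|k _]; first exact: add_continuous.
have [Re_cvg Im_cvg] := exp_partial_complex_cvg (v_k k u) (vt_k k u).
rewrite /exp_harmonic cosB mulrDr !mulrA.
by apply: cvgD; apply: cvgM => //; exact: cvg_cst.
Qed.

Lemma sum_pc_h_coord (f : nat -> R) (p : 'I_n) :
  (\sum_(q < n) f q *: pc_h R n q) 0 p = f p.
Proof.
rewrite summxE (bigD1 p) //= big1 => [|q q_neq_p].
  by rewrite !mxE modn_small // eqxx mulr1 addr0.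
by rewrite !mxE modn_small // eq_sym (negbTE (q_neq_p : (q : nat) != p)) mulr0.
Qed.

Lemma e_plus_coord (p : 'I_n) : e_plus R n 0 p = n%:R^-1.
Proof.
rewrite mxE; under eq_bigr => q _ do rewrite -[pc_h R n q]scale1r.
by rewrite (sum_pc_h_coord (fun=> 1)) mulr1.
Qed.

Lemma e_minus_coord (p : 'I_n) : e_minus R n 0 p = n%:R^-1 * (-1) ^+ p.
Proof. by rewrite mxE (sum_pc_h_coord (fun q => (-1) ^+ q)). Qed.

Lemma canonical_term_coord u k (p : 'I_n) :
  (expR (v_k k u) *: (cos (vt_k k u) *: e_k R n k + sin (vt_k k u) *: et_k R n k)) 0 p =
  2 / n%:R * exp_harmonic u p k.
Proof.
rewrite !mxE (sum_pc_h_coord (fun q => cos (2 * pi * k%:R * q%:R / n%:R))).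
rewrite (sum_pc_h_coord (fun q => sin (2 * pi * k%:R * q%:R / n%:R))).
by rewrite /exp_harmonic cosB !angleE; ring.
Qed.

Lemma v_k_reflect u k : (k <= n)%N -> v_k (n - k) u = v_k k u.
Proof. by move=> k_le_n; apply: eq_bigr => q _; rewrite !angleE cos_angle_reflect. Qed.

Lemma vt_k_reflect u k : (k <= n)%N -> vt_k (n - k) u = - vt_k k u.
Proof.
move=> k_le_n; rewrite /vt_k -sumrN; apply: eq_bigr => q _.
by rewrite !angleE sin_angle_reflect // mulrN.
Qed.

Lemma exp_harmonic_reflect u p k : (k <= n)%N ->
  exp_harmonic u p (n - k) = exp_harmonic u p k.
Proof.
move=> k_le_n; rewrite /exp_harmonic v_k_reflect // vt_k_reflect // angle_reflect //.
set T := (pi *+ 2) *+ p; rewrite -cosN.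
have -> : - (- vt_k k u - (T - angle (k * p))) = vt_k k u - angle (k * p) + T by ring.
by rewrite /T (periodicn (@cosD2pi R)).
Qed.

Lemma exp_harmonic0 u p : exp_harmonic u p 0 = expR (v_plus u).
Proof.
rewrite /exp_harmonic /angle !mulr0n subr0.
have -> : vt_k 0 u = 0.
  by rewrite /vt_k big1 // => q _; rewrite angleE mul0n /angle mulr0n sin0 mulr0.
have -> : v_k 0 u = v_plus u.
  by apply: eq_bigr => q _; rewrite angleE mul0n /angle mulr0n cos0 mulr1.
by rewrite cos0 mulr1.
Qed.

Lemma exp_harmonic_half u m (p : 'I_n) : n = m.*2 ->
  exp_harmonic u p m = expR (v_minus u) * (-1) ^+ p.
Proof.
move=> n_eq; have angle_m q : angle (m * q) = pi *+ q.
  have angle_m2 : angle m *+ 2 = pi *+ 2 by rewrite -angle_mull muln2 -n_eq angle_n.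
  by rewrite angle_mull (pmulrnI _ angle_m2).
rewrite /exp_harmonic angle_m.
have -> : vt_k m u = 0.
  rewrite /vt_k big1 // => q _.
  by rewrite angleE angle_m -[pi *+ q]add0r (alternatingn (@sinDpi R)) sin0 !mulr0.
have -> : v_k m u = v_minus u.
  apply: eq_bigr => q _.
  by rewrite angleE angle_m -[pi *+ q]add0r (alternatingn (@cosDpi R)) cos0 mulr1 mulrC.
by rewrite sub0r cosN -[pi *+ p]add0r (alternatingn (@cosDpi R)) cos0 mulr1.
Qed.

Lemma canonical_expansion_even_coord u (p : 'I_n) : ~~ odd n ->
  (expR (v_plus u) *: e_plus R n + expR (v_minus u) *: e_minus R n
    + \sum_(1 <= k < n./2)
        expR (v_k k u) *: (cos (vt_k k u) *: e_k R n k + sin (vt_k k u) *: et_k R n k)) 0 p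
  = n%:R^-1 * \sum_(k < n) exp_harmonic u p k.
Proof.
move=> n_even; have n_eq : n = n./2.*2 by rewrite -[LHS]odd_double_half (negbTE n_even).
have half_gt0 : (0 < n./2)%N by rewrite -double_gt0 -n_eq.
rewrite (sum_fold_even _ _ _ n_eq half_gt0) => [|k /andP[_ /ltnW]];
  last exact: exp_harmonic_reflect.
rewrite 2!mxE [(_ *: e_plus R n) 0 p]mxE [(_ *: e_minus R n) 0 p]mxE summxE.
rewrite e_plus_coord e_minus_coord exp_harmonic0 (exp_harmonic_half u _ p n_eq).
under eq_big_nat => k _ do rewrite canonical_term_coord.
by rewrite -mulr_sumr -mulr_natr; ring.
Qed.

Lemma canonical_expansion_odd_coord u (p : 'I_n) : odd n ->
  (expR (v_plus u) *: e_plus R n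
    + \sum_(1 <= k < (n.-1)./2.+1)
        expR (v_k k u) *: (cos (vt_k k u) *: e_k R n k + sin (vt_k k u) *: et_k R n k)) 0 p
  = n%:R^-1 * \sum_(k < n) exp_harmonic u p k.
Proof.
move=> n_odd; have n_eq : n = n./2.*2.+1 by rewrite -[LHS]odd_double_half n_odd add1n.
have -> : (n.-1)./2 = n./2 by rewrite {1}n_eq /= doubleK.
rewrite (sum_fold_odd _ _ _ n_eq) => [|k /andP[_ /ltnW]];
  last exact: exp_harmonic_reflect.
rewrite mxE [(_ *: e_plus R n) 0 p]mxE summxE e_plus_coord exp_harmonic0.
under eq_big_nat => k _ do rewrite canonical_term_coord.
by rewrite -mulr_sumr -mulr_natr; ring.
Qed.

End PolarCharacters.

Theorem mainTheorem12 (R : realType) (n : nat) (hn : (2 <= n)%N)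
    (u : 'rV[R]_n) :
  (~~ odd n ->
    pcexp_partial u @ \oo -->
      ((expR (v_plus u) *: e_plus R n + expR (v_minus u) *: e_minus R n
       + \sum_(1 <= k < n./2)
           expR (v_k k u) *: (cos (vt_k k u) *: e_k R n k
                              + sin (vt_k k u) *: et_k R n k)) : 'rV[R]_n)) /\
  (odd n ->
    pcexp_partial u @ \oo -->
      ((expR (v_plus u) *: e_plus R n
       + \sum_(1 <= k < (n.-1)./2.+1)
           expR (v_k k u) *: (cos (vt_k k u) *: e_k R n k
                              + sin (vt_k k u) *: et_k R n k)) : 'rV[R]_n)).
Proof.
have n_gt0 : (0 < n)%N by apply: leq_trans hn.
split=> n_parity; apply: cvg_mx_entrywise => i p; rewrite ord1.
  by rewrite canonical_expansion_even_coord //; exact: pcexp_partial_coord_cvg.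
by rewrite canonical_expansion_odd_coord //; exact: pcexp_partial_coord_cvg.
Qed.
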